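(* Let $\Sigma_N(z):=\left(\int_0^{z} h^N(x)^2\,\tilde h^N(x)\,dx\right)^{1/2}$ for $z\in[0,L_N]$, and let $A_N:=6\log\log N-\log\log\log N$. There exist constants $\sigma>0$ and $a>0$, depending only on $c$, such that, as $N\to\infty$, $$\frac{1}{N^{c}}\Sigma_N(L_N)^2\to\sigma^2,\qquad \frac{1}{N^{c}}\Sigma_N(A_N)^2\to\sigma^2,\qquad \frac{1}{N^{1-c}}\int_0^{A_N}N\,\tilde h^N(x)\,dx\to a .$$
   Context: Fix $c\in(0,1)$. For $\beta\in(0,1)$ put $\gamma_\beta=\sqrt{1-\beta^2}$ and $L_\beta=\gamma_\beta^{-1}\big(\pi-\arctan(\gamma_\beta/\beta)\big)$; the map $\beta\mapsto L_\beta$ is an increasing bijection from $(0,1)$ onto $(\pi/2,\infty)$. For every integer $N$ large enough that $c\log N+6\log\log N>\pi/2$, let $\beta_N\in(0,1)$ be defined by $L_{\beta_N}=c\log N+6\log\log N$, and write $L_N=L_{\beta_N}$, $\gamma_N=\gamma_{\beta_N}$, $\Omega_N=[0,L_N]$. Define, for $x\in\Omega_N$, $\tilde h^N(x)=\gamma_N^{-1}e^{\beta_N(x-L_N)}\sin(\gamma_N(L_N-x))$ and $h^N(x)=\frac{2\gamma_N}{L_N+\beta_N}e^{\beta_N(L_N-x)}\sin(\gamma_N(L_N-x))$. *)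

From Stdlib Require Import Reals.
From Coquelicot Require Import Coquelicot.
Open Scope R_scope.

Definition gam (b : R) : R := sqrt (1 - b ^ 2).

Definition Lb (b : R) : R := / gam b * (PI - atan (gam b / b)).

(* \tilde h^N(x) with beta = beta_N, L = L_{beta_N} *)
Definition htilde (b x : R) : R :=
  / gam b * exp (b * (x - Lb b)) * sin (gam b * (Lb b - x)).

Definition hN (b x : R) : R :=
  2 * gam b / (Lb b + b) * exp (b * (Lb b - x)) * sin (gam b * (Lb b - x)).

Definition SigmaN (b z : R) : R :=
  sqrt (RInt (fun x => (hN b x) ^ 2 * htilde b x) 0 z).

Definition A_N (N : nat) : R := 6 * ln (ln (INR N)) - ln (ln (ln (INR N))).

From Stdlib Require Import Reals Lra Psatz.
From Coquelicot Require Import Coquelicot.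
Open Scope R_scope.

(* Write [g = gam b], [L = Lb b]; [g L] is the angle in (pi/2, pi) with sine [g] and
   cosine [-b].  In the variable [y = L - x] the integrands are multiples of
   [exp (-b y) sin (g y)] and [exp (b y) sin (g y) ^ 3], whose primitives are explicit,
   so [Sigma_N(z)^2 = K (G L - G (L - z))] with [K = 4 g / (L + b)^2],
   [G L = 16 b g^3 exp (b L) / (1 + 8 g^2)], and [int_0^A htilde = exp (b (A - L)) sin (g A) / g].
   As [L ~ c log N], [g L <= pi] forces [g -> 0], [g L -> pi] and [(1 - b) L -> 0].
   Since [exp (b L) = N^c (log N)^6 exp (-(1 - b) L)], [K G L / N^c -> 64 pi^4 / c^6];
   since [L - A_N = c log N + log log log N], the remainder [K G (L - z) / N^c] is [O(g)]
   for every [z >= A_N], and [N^c int_0^(A_N) htilde -> 6]. *)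

Section Beta.
Variable b : R.
Hypothesis hb : 0 < b < 1.

Lemma sqr_add_sqr_gam : b ^ 2 + gam b ^ 2 = 1.
Proof.
  unfold gam. rewrite <- (Rsqr_pow2 (sqrt _)), Rsqr_sqrt; nra.
Qed.

Lemma gam_bounds : 0 < gam b < 1.
Proof.
  assert (0 < gam b) by (apply sqrt_lt_R0; nra).
  pose proof sqr_add_sqr_gam. nra.
Qed.

Lemma gam_Lb_eq : gam b * Lb b = PI - atan (gam b / b).
Proof.
  pose proof gam_bounds. unfold Lb. field. lra.
Qed.

Lemma gam_Lb_bounds : PI / 2 < gam b * Lb b < PI.
Proof.
  pose proof gam_bounds. rewrite gam_Lb_eq.
  assert (0 < atan (gam b / b)).
  { rewrite <- atan_0. apply atan_increasing, Rdiv_lt_0_compat; lra. }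
  pose proof (atan_bound (gam b / b)). lra.
Qed.

Lemma Lb_pos : 0 < Lb b.
Proof.
  pose proof gam_bounds. pose proof gam_Lb_bounds. pose proof PI_RGT_0. nra.
Qed.

Lemma sin_cos_gam_Lb : sin (gam b * Lb b) = gam b /\ cos (gam b * Lb b) = - b.
Proof.
  pose proof gam_bounds. pose proof sqr_add_sqr_gam as hbg.
  assert (hs : sqrt (1 + (gam b / b)²) = / b).
  { rewrite <- (sqrt_Rsqr (/ b)) by (left; apply Rinv_0_lt_compat; lra).
    f_equal. unfold Rsqr. field_simplify; [|lra|lra]. rewrite <- hbg. field. lra. }
  rewrite gam_Lb_eq, sin_PI_x, sin_atan, hs, Rminus_def, cos_plus, cos_PI, sin_PI,
    cos_neg, sin_neg, cos_atan, hs.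
  split; field; lra.
Qed.

End Beta.

Definition exp_sin_prim (a k y : R) : R :=
  exp (a * y) * (a * sin (k * y) - k * cos (k * y)).

Lemma is_derive_exp_sin_prim (a k y : R) :
  is_derive (exp_sin_prim a k) y ((a ^ 2 + k ^ 2) * (exp (a * y) * sin (k * y))).
Proof.
  unfold exp_sin_prim. auto_derive; [exact I | ring].
Qed.

Lemma Rabs_exp_sin_prim_le (a k y : R) :
  Rabs (exp_sin_prim a k y) <= (Rabs a + Rabs k) * exp (a * y).
Proof.
  unfold exp_sin_prim.
  rewrite Rabs_mult, (Rabs_pos_eq (exp _)) by (left; apply exp_pos). rewrite Rmult_comm.
  apply Rmult_le_compat_r; [left; apply exp_pos|].
  unfold Rminus. eapply Rle_trans; [apply Rabs_triang|]. rewrite Rabs_Ropp, !Rabs_mult.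
  pose proof (Rabs_pos a). pose proof (Rabs_pos k).
  assert (Rabs (sin (k * y)) <= 1) by (apply Rabs_le, SIN_bound).
  assert (Rabs (cos (k * y)) <= 1) by (apply Rabs_le, COS_bound).
  nra.
Qed.

Lemma sin_3a (u : R) : sin (3 * u) = 3 * sin u - 4 * sin u ^ 3.
Proof.
  replace (3 * u) with (2 * u + u) by ring.
  rewrite sin_plus, sin_2a, cos_2a.
  transitivity (sin u * (3 * cos u ^ 2 - sin u ^ 2)); [ring|].
  replace (cos u ^ 2) with (1 - sin u ^ 2) by (pose proof (sin2_cos2 u); unfold Rsqr in *; lra).
  ring.
Qed.

(* From [sin u ^ 3 = (3 sin u - sin (3 u)) / 4]. *)
Definition exp_sin3_prim (a g y : R) : R :=
  3 / 4 * exp_sin_prim a g y / (a ^ 2 + g ^ 2)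
  - 1 / 4 * exp_sin_prim a (3 * g) y / (a ^ 2 + (3 * g) ^ 2).

Lemma is_derive_exp_sin3_prim (a g y : R) : a ^ 2 + g ^ 2 <> 0 ->
  is_derive (exp_sin3_prim a g) y (exp (a * y) * sin (g * y) ^ 3).
Proof.
  intros hag. assert (hag3 : a ^ 2 + (3 * g) ^ 2 <> 0) by nra.
  set (k1 := 3 / 4 / (a ^ 2 + g ^ 2)). set (k3 := 1 / 4 / (a ^ 2 + (3 * g) ^ 2)).
  apply (is_derive_ext (fun y => k1 * exp_sin_prim a g y - k3 * exp_sin_prim a (3 * g) y)).
  { intros t. cbn. unfold exp_sin3_prim, k1, k3. field. split; nra. }
  evar (d : R). replace (exp (a * y) * sin (g * y) ^ 3) with d; subst d.
  - apply @is_derive_minus; apply @is_derive_scal; apply is_derive_exp_sin_prim.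
  - unfold minus, plus, opp, scal; simpl; unfold mult; simpl.
    replace (3 * g * y) with (3 * (g * y)) by ring. rewrite sin_3a. unfold k1, k3. field. auto.
Qed.

Lemma is_RInt_reflected (P f : R -> R) (L z : R) :
  (forall y, is_derive P y (f y)) -> (forall y, continuous f y) ->
  is_RInt (fun x => f (L - x)) 0 z (P L - P (L - z)).
Proof.
  intros hP hf.
  replace (P L - P (L - z)) with (minus (- P (L - z)) (- P (L - 0)))
    by (unfold minus, plus, opp; simpl; rewrite Rminus_0_r; ring).
  apply (is_RInt_derive (fun x => - P (L - x))).
  - intros x _. evar (d : R). replace (f (L - x)) with d; subst d.
    + apply @is_derive_opp, (is_derive_comp P (fun x => L - x)); [apply hP|].
      auto_derive; [exact I | reflexivity].
    + unfold scal, opp; simpl; unfold mult; simpl. ring.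
  - intros x _. apply (continuous_comp (fun x => L - x) f); [|apply hf].
    apply (ex_derive_continuous (fun x => L - x)). auto_derive. exact I.
Qed.

Lemma is_RInt_htilde (b A : R) : 0 < b < 1 ->
  is_RInt (htilde b) 0 A (exp (b * (A - Lb b)) * sin (gam b * A) / gam b).
Proof.
  intros hb. pose proof (gam_bounds b hb). pose proof (sqr_add_sqr_gam b hb) as hbg.
  destruct (sin_cos_gam_Lb b hb) as [hs hc].
  set (g := gam b) in *. set (L := Lb b) in *.
  set (f := fun y => / g * (exp (- b * y) * sin (g * y))).
  apply (is_RInt_ext (fun x => f (L - x))).
  { intros x _. cbn. unfold f, htilde. fold g L.
    replace (- b * (L - x)) with (b * (x - L)) by ring. ring. }
  replace (exp (b * (A - L)) * sin (g * A) / g)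
    with (/ g * exp_sin_prim (- b) g L - / g * exp_sin_prim (- b) g (L - A)).
  - apply (is_RInt_reflected (fun y => / g * exp_sin_prim (- b) g y)).
    + intros y. unfold f. evar (d : R). replace (/ g * _) with d; subst d.
      * apply @is_derive_scal, is_derive_exp_sin_prim.
      * unfold scal; simpl; unfold mult; simpl.
        replace (- b * (- b * 1) + g * (g * 1)) with (b ^ 2 + g ^ 2) by ring. rewrite hbg. ring.
    + intros y. apply (ex_derive_continuous f). unfold f. auto_derive. exact I.
  - unfold exp_sin_prim. rewrite (Rmult_minus_distr_l g), sin_minus, cos_minus, hs, hc.
    replace (- b * (L - A)) with (b * (A - L)) by ring.
    transitivity (exp (b * (A - L)) * sin (g * A) * (b ^ 2 + g ^ 2) / g); [field; lra|].
    rewrite hbg. field. lra.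
Qed.

Lemma is_RInt_hN2_htilde (b z : R) : 0 < b < 1 ->
  is_RInt (fun x => hN b x ^ 2 * htilde b x) 0 z
    (4 * gam b / (Lb b + b) ^ 2 *
       (exp_sin3_prim b (gam b) (Lb b) - exp_sin3_prim b (gam b) (Lb b - z))).
Proof.
  intros hb. pose proof (gam_bounds b hb). pose proof (sqr_add_sqr_gam b hb).
  pose proof (Lb_pos b hb).
  set (g := gam b) in *. set (L := Lb b) in *. set (K := 4 * g / (L + b) ^ 2).
  set (f := fun y => K * (exp (b * y) * sin (g * y) ^ 3)).
  apply (is_RInt_ext (fun x => f (L - x))).
  { intros x _. cbn. unfold f, K, hN, htilde. fold g L.
    replace (exp (b * (x - L))) with (/ exp (b * (L - x)))
      by (rewrite <- exp_Ropp; f_equal; ring).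
    field. pose proof (exp_pos (b * (L - x))). lra. }
  rewrite Rmult_minus_distr_l.
  apply (is_RInt_reflected (fun y => K * exp_sin3_prim b g y)).
  - intros y. apply @is_derive_scal, is_derive_exp_sin3_prim. lra.
  - intros y. apply (ex_derive_continuous f). unfold f. auto_derive. exact I.
Qed.

Lemma exp_sin3_prim_at_Lb (b : R) : 0 < b < 1 ->
  exp_sin3_prim b (gam b) (Lb b) =
  16 * b * gam b ^ 3 / (1 + 8 * gam b ^ 2) * exp (b * Lb b).
Proof.
  intros hb. pose proof (gam_bounds b hb). pose proof (sqr_add_sqr_gam b hb) as hbg.
  destruct (sin_cos_gam_Lb b hb) as [hs hc].
  set (g := gam b) in *. set (L := Lb b) in *.
  assert (h3 : sin (3 * g * L) = 3 * g - 4 * g ^ 3 /\ cos (3 * g * L) = 3 * b - 4 * b ^ 3).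
  { rewrite Rmult_assoc, sin_3a, hs. split; [ring|].
    replace (3 * (g * L)) with (2 * (g * L) + g * L) by ring.
    rewrite cos_plus, sin_2a, cos_2a, hs, hc.
    replace (b * b) with (1 - g ^ 2) by lra. ring_simplify. nra. }
  destruct h3 as [hs3 hc3].
  unfold exp_sin3_prim, exp_sin_prim. rewrite hs, hc, hs3, hc3.
  replace (b ^ 2) with (1 - g ^ 2) by lra.
  replace (b ^ 3) with (b * (1 - g ^ 2)) by (rewrite <- hbg; ring).
  field. nra.
Qed.

Lemma Rabs_exp_sin3_prim_le (a g y : R) : a ^ 2 + g ^ 2 = 1 ->
  Rabs (exp_sin3_prim a g y) <= 3 * exp (a * y).
Proof.
  intros hag.
  assert (ha : Rabs a <= 1) by (apply Rabs_le; nra).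
  assert (hg : Rabs g <= 1) by (apply Rabs_le; nra).
  assert (hd : 1 <= a ^ 2 + (3 * g) ^ 2) by nra.
  pose proof (Rabs_exp_sin_prim_le a g y) as h1.
  pose proof (Rabs_exp_sin_prim_le a (3 * g) y) as h3.
  rewrite Rabs_mult, (Rabs_pos_eq 3) in h3 by lra.
  pose proof (exp_pos (a * y)).
  assert (hq : Rabs (exp_sin_prim a (3 * g) y / (a ^ 2 + (3 * g) ^ 2)) <= 4 * exp (a * y)).
  { rewrite Rabs_div, (Rabs_pos_eq (_ + _)) by lra.
    apply Rmult_le_reg_r with (a ^ 2 + (3 * g) ^ 2); [lra|].
    unfold Rdiv. rewrite Rmult_assoc, Rinv_l by lra. nra. }
  unfold exp_sin3_prim. rewrite hag.
  replace (3 / 4 * exp_sin_prim a g y / 1 - _) with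
    (3 / 4 * exp_sin_prim a g y - 1 / 4 * (exp_sin_prim a (3 * g) y / (a ^ 2 + (3 * g) ^ 2)))
    by (field; lra).
  apply Rabs_le_between in h1. apply Rabs_le_between in hq. apply Rabs_le. nra.
Qed.

(* [A_N N = A_l (ln (INR N))]. *)
Definition A_l (l : R) : R := 6 * ln l - ln (ln l).

Lemma ln_lt_id (x : R) : 0 < x -> ln x < x.
Proof.
  intros hx. rewrite <- (ln_exp x) at 2. apply ln_increasing; [exact hx|].
  pose proof (exp_ineq1_le x). pose proof (exp_ineq1 x). lra.
Qed.

Lemma exp_le_exp (x y : R) : x <= y -> exp x <= exp y.
Proof. intros [h | <-]; [left; apply exp_increasing, h | right; reflexivity]. Qed.

Lemma one_lt_ln_l (l : R) : exp 1 < l -> 1 < ln l.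
Proof. intros hl. rewrite <- (ln_exp 1). apply ln_increasing; [apply exp_pos | exact hl]. Qed.

Lemma A_l_bounds (l : R) : exp 1 < l -> 0 < A_l l <= 6 * ln l.
Proof.
  intros hl. pose proof (one_lt_ln_l l hl). pose proof (ln_lt_id (ln l)).
  assert (0 < ln (ln l)) by (rewrite <- ln_1; apply ln_increasing; lra).
  unfold A_l. lra.
Qed.

Section Scaling.
Variables c l b : R.
Hypothesis hc : 0 < c.
Hypothesis hl : exp 1 < l.
Hypothesis hb : 0 < b < 1.
Hypothesis hL : Lb b = c * l + 6 * ln l.

Lemma Lb_sub_A_l : Lb b - A_l l = c * l + ln (ln l).
Proof. unfold A_l. rewrite hL. ring. Qed.

Lemma A_l_le_Lb : A_l l <= Lb b.
Proof.
  pose proof (A_l_bounds l hl). assert (0 < l) by (pose proof (exp_pos 1); lra).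
  rewrite hL. nra.
Qed.

Lemma Sigma2_remainder_le (y : R) : y <= Lb b - A_l l ->
  Rabs (/ exp (c * l) * (4 * gam b / (Lb b + b) ^ 2 * exp_sin3_prim b (gam b) y))
    <= 12 * gam b.
Proof.
  intros hy. pose proof (gam_bounds b hb). pose proof (one_lt_ln_l l hl).
  pose proof (A_l_bounds l hl). pose proof A_l_le_Lb. pose proof (exp_pos (c * l)).
  assert (hby : exp (b * y) <= exp (c * l) * ln l).
  { rewrite <- (exp_ln (ln l)) by lra. rewrite <- exp_plus, <- Lb_sub_A_l.
    apply exp_le_exp. destruct (Rle_dec 0 y); nra. }
  assert (hK : 4 * gam b / (Lb b + b) ^ 2 * ln l <= 4 * gam b).
  { assert (6 * ln l <= Lb b) by (rewrite hL; pose proof (exp_pos 1); nra).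
    assert (ln l / (Lb b + b) ^ 2 <= 1) by (apply Rcomplements.Rle_div_l; nra).
    replace (4 * gam b / (Lb b + b) ^ 2 * ln l) with (4 * gam b * (ln l / (Lb b + b) ^ 2))
      by (field; nra).
    nra. }
  pose proof (Rabs_exp_sin3_prim_le b (gam b) y (sqr_add_sqr_gam b hb)).
  assert (0 <= 4 * gam b / (Lb b + b) ^ 2) by (apply Rcomplements.Rdiv_le_0_compat; nra).
  rewrite !Rabs_mult, Rabs_pos_eq, (Rabs_pos_eq (_ / _))
    by (try apply Rlt_le, Rinv_0_lt_compat; lra).
  apply Rmult_le_reg_l with (exp (c * l)); [lra|].
  rewrite <- Rmult_assoc, Rinv_r, Rmult_1_l by lra.
  nra.
Qed.

Lemma Sigma2_main_eq :
  / exp (c * l) * (4 * gam b / (Lb b + b) ^ 2 * exp_sin3_prim b (gam b) (Lb b)) =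
  64 * b * (gam b * Lb b) ^ 4 * exp (- ((1 - b) * Lb b)) /
    ((Lb b / l) ^ 4 * ((Lb b + b) / l) ^ 2 * (1 + 8 * gam b ^ 2)).
Proof.
  pose proof (gam_bounds b hb). pose proof (Lb_pos b hb). pose proof (one_lt_ln_l l hl).
  assert (0 < l) by (pose proof (exp_pos 1); lra).
  assert (he : exp (b * Lb b) = exp (- ((1 - b) * Lb b)) * exp (c * l) * l ^ 6).
  { rewrite <- (exp_ln (l ^ 6)) by (apply pow_lt; lra).
    rewrite ln_pow, <- !exp_plus by lra. f_equal.
    rewrite hL. replace (INR 6) with 6 by (simpl; ring). ring. }
  rewrite exp_sin3_prim_at_Lb, he by exact hb.
  field. pose proof (exp_pos (c * l)). repeat split; nra.
Qed.

Lemma htilde_integral_eq :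
  exp (c * l) * RInt (htilde b) 0 (A_l l) =
  exp ((1 - b) * (Lb b - A_l l)) * (A_l l / ln l) * (sin (gam b * A_l l) / (gam b * A_l l)).
Proof.
  pose proof (gam_bounds b hb). pose proof (one_lt_ln_l l hl). pose proof (A_l_bounds l hl).
  rewrite (is_RInt_unique _ _ _ _ (is_RInt_htilde b (A_l l) hb)).
  assert (he : exp (c * l) * exp (b * (A_l l - Lb b)) = exp ((1 - b) * (Lb b - A_l l)) / ln l).
  { rewrite <- (exp_ln (ln l)) by lra. unfold Rdiv. rewrite <- exp_Ropp, <- !exp_plus.
    f_equal. replace (ln (ln l)) with (Lb b - A_l l - c * l) by (rewrite Lb_sub_A_l; ring).
    ring. }
  transitivity (exp (c * l) * exp (b * (A_l l - Lb b)) * sin (gam b * A_l l) / gam b).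
  { unfold Rdiv. ring. }
  rewrite he. field. lra.
Qed.

End Scaling.

Lemma is_lim_seq_replace (u : nat -> R) (x y : R) :
  is_lim_seq u x -> x = y -> is_lim_seq u y.
Proof. now intros hu <-. Qed.

Lemma is_lim_seq_ln_p (u : nat -> R) :
  is_lim_seq u p_infty -> is_lim_seq (fun n => ln (u n)) p_infty.
Proof.
  intros hu. apply (is_lim_comp_seq ln u p_infty p_infty is_lim_ln_p); [|exact hu].
  apply filter_forall. discriminate.
Qed.

Lemma is_lim_seq_ln_div_p (u : nat -> R) :
  is_lim_seq u p_infty -> is_lim_seq (fun n => ln (u n) / u n) 0.
Proof.
  intros hu. apply (is_lim_comp_seq (fun y => ln y / y) u p_infty 0 is_lim_div_ln_p); [|exact hu].
  apply filter_forall. discriminate.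
Qed.

Lemma is_lim_seq_inv_p (u : nat -> R) :
  is_lim_seq u p_infty -> is_lim_seq (fun n => / u n) 0.
Proof. intros hu. apply (is_lim_seq_inv _ _ hu). discriminate. Qed.

Lemma is_lim_seq_pow (u : nat -> R) (x : R) (k : nat) :
  is_lim_seq u x -> is_lim_seq (fun n => u n ^ k) (x ^ k).
Proof.
  intros hu. induction k as [|k IH]; [apply is_lim_seq_const|].
  exact (is_lim_seq_mult' _ _ _ _ hu IH).
Qed.

(* [l N] plays the role of [ln N]. *)
Section Asymptotics.
Variables (c : R) (l beta : nat -> R).
Hypothesis hc : 0 < c.
Hypothesis l_lim : is_lim_seq l p_infty.
Hypothesis beta_spec : eventually (fun N =>
  0 < beta N < 1 /\ Lb (beta N) = c * l N + 6 * ln (l N)).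

Let L N := Lb (beta N).
Let g N := gam (beta N).
Let A N := A_l (l N).

Lemma scaling_eventually : eventually (fun N =>
  exp 1 < l N /\ 0 < beta N < 1 /\ Lb (beta N) = c * l N + 6 * ln (l N)).
Proof.
  apply (is_lim_seq_spec l p_infty) in l_lim.
  generalize (filter_and _ _ (l_lim (exp 1)) beta_spec). apply filter_imp. tauto.
Qed.

Lemma ln_l_lim : is_lim_seq (fun N => ln (l N)) p_infty.
Proof. exact (is_lim_seq_ln_p l l_lim). Qed.

Lemma Lb_div_l_lim : is_lim_seq (fun N => L N / l N) c.
Proof.
  apply (is_lim_seq_ext_loc (fun N => c + 6 * (ln (l N) / l N))).
  - generalize scaling_eventually. apply filter_imp. intros N [hl [_ hL]].
    unfold L. rewrite hL. field. pose proof (exp_pos 1). lra.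
  - apply (is_lim_seq_replace _ (c + 6 * 0)); [|ring].
    apply is_lim_seq_plus'; [apply is_lim_seq_const|].
    apply (is_lim_seq_scal_l _ 6 0), is_lim_seq_ln_div_p, l_lim.
Qed.

Lemma Lb_lim : is_lim_seq L p_infty.
Proof.
  apply (is_lim_seq_le_p_loc (fun N => ln (l N))); [|exact ln_l_lim].
  generalize scaling_eventually. apply filter_imp. intros N [hl [_ hL]].
  pose proof (one_lt_ln_l (l N) hl). pose proof (exp_pos 1).
  unfold L. rewrite hL. nra.
Qed.

Lemma gam_lim : is_lim_seq g 0.
Proof.
  apply (is_lim_seq_le_le_loc (fun _ => 0) _ (fun N => PI * / L N)).
  - generalize scaling_eventually. apply filter_imp. intros N [_ [hb _]].
    pose proof (gam_bounds _ hb). pose proof (gam_Lb_bounds _ hb). pose proof (Lb_pos _ hb).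
    split; [unfold g; lra|].
    apply Rmult_le_reg_r with (L N); [unfold L; lra|].
    unfold g, L. rewrite Rmult_assoc, Rinv_l by lra. lra.
  - apply is_lim_seq_const.
  - apply (is_lim_seq_replace _ (PI * 0)); [|ring].
    apply (is_lim_seq_scal_l _ PI 0), is_lim_seq_inv_p, Lb_lim.
Qed.

Lemma beta_lim : is_lim_seq beta 1.
Proof.
  apply (is_lim_seq_ext_loc (fun N => sqrt (1 - g N ^ 2))).
  - generalize scaling_eventually. apply filter_imp. intros N [_ [hb _]].
    pose proof (sqr_add_sqr_gam _ hb).
    unfold g. replace (1 - _) with (beta N ^ 2) by lra. apply sqrt_pow2. lra.
  - apply (is_lim_seq_replace _ (sqrt (1 - 0 ^ 2)));
      [|rewrite pow_i, Rminus_0_r, sqrt_1 by lia; reflexivity].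
    apply is_lim_seq_continuous; [apply continuity_pt_sqrt; simpl; lra|].
    apply is_lim_seq_minus'; [apply is_lim_seq_const|].
    exact (is_lim_seq_pow _ _ 2 gam_lim).
Qed.

Lemma gam_Lb_lim : is_lim_seq (fun N => g N * L N) PI.
Proof.
  apply (is_lim_seq_ext_loc (fun N => PI - atan (g N / beta N))).
  - generalize scaling_eventually. apply filter_imp. intros N [_ [hb _]].
    unfold g, L. rewrite gam_Lb_eq by exact hb. reflexivity.
  - apply (is_lim_seq_replace _ (PI - atan (0 / 1)));
      [|unfold Rdiv; rewrite Rmult_0_l, atan_0; ring].
    apply is_lim_seq_minus'; [apply is_lim_seq_const|].
    apply is_lim_seq_continuous; [apply continuity_pt_filterlim, continuous_atan|].
    apply is_lim_seq_div'; [exact gam_lim | exact beta_lim | lra].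
Qed.

(* [(1 - b) L = (g L) g / (1 + b)] since [1 - b ^ 2 = g ^ 2]. *)
Lemma one_sub_beta_Lb_lim : is_lim_seq (fun N => (1 - beta N) * L N) 0.
Proof.
  apply (is_lim_seq_ext_loc (fun N => g N * L N * g N / (1 + beta N))).
  - generalize scaling_eventually. apply filter_imp. intros N [_ [hb _]].
    pose proof (sqr_add_sqr_gam _ hb). unfold g in *.
    apply Rmult_eq_reg_r with (1 + beta N); [|lra].
    field_simplify; [|lra]. replace (gam (beta N) ^ 2) with (1 - beta N ^ 2) by lra. ring.
  - apply (is_lim_seq_replace _ (PI * 0 / (1 + 1))); [|field].
    apply is_lim_seq_div'; [apply is_lim_seq_mult'; [exact gam_Lb_lim | exact gam_lim] | | lra].
    apply is_lim_seq_plus'; [apply is_lim_seq_const | exact beta_lim].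
Qed.

Lemma A_div_ln_lim : is_lim_seq (fun N => A N / ln (l N)) 6.
Proof.
  apply (is_lim_seq_ext_loc (fun N => 6 - ln (ln (l N)) / ln (l N))).
  - generalize scaling_eventually. apply filter_imp. intros N [hl _].
    pose proof (one_lt_ln_l _ hl). unfold A, A_l. field. lra.
  - apply (is_lim_seq_replace _ (6 - 0)); [|ring].
    apply is_lim_seq_minus'; [apply is_lim_seq_const|].
    apply is_lim_seq_ln_div_p, ln_l_lim.
Qed.

Lemma A_div_Lb_lim : is_lim_seq (fun N => A N / L N) 0.
Proof.
  apply (is_lim_seq_ext_loc (fun N => A N / ln (l N) * (ln (l N) / l N) * / (L N / l N))).
  - generalize scaling_eventually. apply filter_imp. intros N [hl [hb _]].
    pose proof (one_lt_ln_l _ hl). pose proof (Lb_pos _ hb). pose proof (exp_pos 1).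
    unfold L in *. field. lra.
  - apply (is_lim_seq_replace _ (6 * 0 * / c)); [|ring].
    apply is_lim_seq_mult'; [apply is_lim_seq_mult'; [exact A_div_ln_lim|]|].
    + apply is_lim_seq_ln_div_p, l_lim.
    + apply (is_lim_seq_inv _ c Lb_div_l_lim). intro e; injection e; lra.
Qed.

Lemma one_sub_beta_Lb_sub_A_lim : is_lim_seq (fun N => (1 - beta N) * (L N - A N)) 0.
Proof.
  apply (is_lim_seq_ext_loc (fun N => (1 - beta N) * L N * (1 - A N / L N))).
  - generalize scaling_eventually. apply filter_imp. intros N [_ [hb _]].
    pose proof (Lb_pos _ hb). unfold L in *. field. lra.
  - apply (is_lim_seq_replace _ (0 * (1 - 0))); [|ring].
    apply is_lim_seq_mult'; [exact one_sub_beta_Lb_lim|].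
    apply is_lim_seq_minus'; [apply is_lim_seq_const | exact A_div_Lb_lim].
Qed.

Lemma gam_A_lim : is_lim_seq (fun N => g N * A N) 0.
Proof.
  apply (is_lim_seq_ext_loc (fun N => g N * L N * (A N / L N))).
  - generalize scaling_eventually. apply filter_imp. intros N [_ [hb _]].
    pose proof (Lb_pos _ hb). unfold L in *. field. lra.
  - apply (is_lim_seq_replace _ (PI * 0)); [|ring].
    apply is_lim_seq_mult'; [exact gam_Lb_lim | exact A_div_Lb_lim].
Qed.

Lemma Sigma2_main_lim : is_lim_seq (fun N =>
  / exp (c * l N) * (4 * g N / (L N + beta N) ^ 2 * exp_sin3_prim (beta N) (g N) (L N)))
  ((8 * PI ^ 2 / c ^ 3) ^ 2).
Proof.
  apply (is_lim_seq_ext_loc (fun N =>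
    64 * beta N * (g N * L N) ^ 4 * exp (- ((1 - beta N) * L N)) /
      ((L N / l N) ^ 4 * (L N / l N + beta N * / l N) ^ 2 * (1 + 8 * g N ^ 2)))).
  - generalize scaling_eventually. apply filter_imp. intros N [hl [hb hL]].
    unfold g, L. rewrite (Sigma2_main_eq c (l N) (beta N)) by assumption.
    pose proof (exp_pos 1). do 3 f_equal. field. lra.
  - apply (is_lim_seq_replace _
      (64 * 1 * PI ^ 4 * exp (- 0) / (c ^ 4 * (c + 1 * 0) ^ 2 * (1 + 8 * 0 ^ 2)))).
    2:{ rewrite Ropp_0, exp_0. field. lra. }
    apply is_lim_seq_div'.
    + apply is_lim_seq_mult'; [apply is_lim_seq_mult'; [apply is_lim_seq_mult'|]|].
      * apply is_lim_seq_const.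
      * exact beta_lim.
      * apply is_lim_seq_pow, gam_Lb_lim.
      * apply is_lim_seq_continuous; [apply derivable_continuous_pt, derivable_pt_exp|].
        apply (is_lim_seq_opp _ 0), one_sub_beta_Lb_lim.
    + apply is_lim_seq_mult'; [apply is_lim_seq_mult'|].
      * apply is_lim_seq_pow, Lb_div_l_lim.
      * apply is_lim_seq_pow, is_lim_seq_plus'; [exact Lb_div_l_lim|].
        apply is_lim_seq_mult'; [exact beta_lim | apply is_lim_seq_inv_p, l_lim].
      * apply is_lim_seq_plus'; [apply is_lim_seq_const|].
        apply (is_lim_seq_scal_l _ 8 (0 ^ 2)), is_lim_seq_pow, gam_lim.
    + assert (0 < c ^ 4 * (c + 1 * 0) ^ 2 * (1 + 8 * 0 ^ 2)).
      { rewrite Rmult_0_r, Rplus_0_r, pow_i, Rmult_0_r, Rplus_0_r, Rmult_1_r by lia.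
        apply Rmult_lt_0_compat; apply pow_lt; lra. }
      lra.
Qed.

Lemma A_le_Lb_eventually : eventually (fun N => A N <= L N).
Proof.
  generalize scaling_eventually. apply filter_imp. intros N [hl [hb hL]].
  apply (A_l_le_Lb c (l N) (beta N)); assumption.
Qed.

Lemma Sigma2_lim (z : nat -> R) : eventually (fun N => A N <= z N) ->
  is_lim_seq (fun N =>
    / exp (c * l N) * RInt (fun x => hN (beta N) x ^ 2 * htilde (beta N) x) 0 (z N))
    ((8 * PI ^ 2 / c ^ 3) ^ 2).
Proof.
  intros hz.
  set (rem N := / exp (c * l N) *
    (4 * g N / (L N + beta N) ^ 2 * exp_sin3_prim (beta N) (g N) (L N - z N))).
  apply (is_lim_seq_ext_loc (fun N =>
    / exp (c * l N) * (4 * g N / (L N + beta N) ^ 2 * exp_sin3_prim (beta N) (g N) (L N))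
    - rem N)).
  - generalize scaling_eventually. apply filter_imp. intros N [_ [hb _]].
    rewrite (is_RInt_unique _ _ _ _ (is_RInt_hN2_htilde (beta N) (z N) hb)).
    unfold rem, g, L. ring.
  - apply (is_lim_seq_replace _ ((8 * PI ^ 2 / c ^ 3) ^ 2 - 0)); [|ring].
    apply is_lim_seq_minus'; [exact Sigma2_main_lim|].
    apply (is_lim_seq_le_le_loc (fun N => - (12 * g N)) _ (fun N => 12 * g N)).
    + generalize (filter_and _ _ hz scaling_eventually). apply filter_imp.
      intros N [hzN [hl [hb hL]]]. apply Rabs_le_between.
      unfold rem, A, L, g in *.
      apply (Sigma2_remainder_le c (l N) (beta N)); try assumption. lra.
    + apply (is_lim_seq_replace _ (- (12 * 0))); [|ring].
      apply (is_lim_seq_opp _ (12 * 0)), (is_lim_seq_scal_l _ 12 0), gam_lim.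
    + apply (is_lim_seq_replace _ (12 * 0)); [|ring].
      apply (is_lim_seq_scal_l _ 12 0), gam_lim.
Qed.

Lemma htilde_integral_lim :
  is_lim_seq (fun N => exp (c * l N) * RInt (htilde (beta N)) 0 (A N)) 6.
Proof.
  apply (is_lim_seq_ext_loc (fun N =>
    exp ((1 - beta N) * (L N - A N)) * (A N / ln (l N)) * (sin (g N * A N) / (g N * A N)))).
  - generalize scaling_eventually. apply filter_imp. intros N [hl [hb hL]].
    symmetry. apply (htilde_integral_eq c (l N) (beta N)); assumption.
  - apply (is_lim_seq_replace _ (exp 0 * 6 * 1)); [|rewrite exp_0; ring].
    apply is_lim_seq_mult'; [apply is_lim_seq_mult'|].
    + apply is_lim_seq_continuous; [apply derivable_continuous_pt, derivable_pt_exp|].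
      exact one_sub_beta_Lb_sub_A_lim.
    + exact A_div_ln_lim.
    + apply (is_lim_comp_seq (fun x => sin x / x) _ 0 1 is_lim_sinc_0); [|exact gam_A_lim].
      generalize scaling_eventually. apply filter_imp. intros N [hl [hb hL]].
      pose proof (gam_bounds _ hb). pose proof (A_l_bounds (l N) hl).
      intro e. injection e. unfold g, A. nra.
Qed.

End Asymptotics.

Lemma is_lim_seq_sqrt_sqr (w u : nat -> R) (s : R) :
  0 < s -> (forall n, 0 < w n) -> is_lim_seq (fun n => w n * u n) s ->
  is_lim_seq (fun n => w n * sqrt (u n) ^ 2) s.
Proof.
  intros hs hw hu. refine (is_lim_seq_ext_loc _ _ _ _ hu).
  apply (is_lim_seq_spec _ _) in hu. specialize (hu (mkposreal s hs)).
  revert hu. apply filter_imp. intros n hn. simpl in hn. apply Rabs_lt_between in hn.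
  specialize (hw n). rewrite pow2_sqrt; [reflexivity|].
  destruct (Rle_lt_dec 0 (u n)) as [h | h]; [exact h | nra].
Qed.

Lemma RInt_htilde_rescaled (n c b A : R) : 0 < n -> 0 < b < 1 ->
  / Rpower n (1 - c) * RInt (fun x => n * htilde b x) 0 A =
  exp (c * ln n) * RInt (htilde b) 0 A.
Proof.
  intros hn hb.
  pose proof (is_RInt_htilde b A hb) as hI.
  rewrite (is_RInt_unique (fun x => n * htilde b x) 0 A _ (is_RInt_scal _ _ _ n _ hI)),
    (is_RInt_unique _ _ _ _ hI).
  unfold Rpower, scal; simpl; unfold mult; simpl.
  rewrite <- (exp_ln n) at 2 by exact hn. rewrite <- exp_Ropp, <- Rmult_assoc, <- exp_plus.
  f_equal. f_equal. ring.
Qed.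

Lemma Lb_spec_eventually (c : R) (beta : nat -> R) : 0 < c ->
  (forall N : nat, c * ln (INR N) + 6 * ln (ln (INR N)) > PI / 2 ->
     0 < beta N < 1 /\ Lb (beta N) = c * ln (INR N) + 6 * ln (ln (INR N))) ->
  eventually (fun N =>
    0 < beta N < 1 /\ Lb (beta N) = c * ln (INR N) + 6 * ln (ln (INR N))).
Proof.
  intros hc hbeta.
  pose proof (is_lim_seq_ln_p _ is_lim_seq_INR) as hl.
  pose proof (is_lim_seq_ln_p _ hl) as hll.
  apply (is_lim_seq_spec _ _) in hl. apply (is_lim_seq_spec _ _) in hll.
  generalize (filter_and _ _ (hl (PI / (2 * c))) (hll 0)). apply filter_imp.
  intros N [h1 h2]. apply hbeta.
  assert (PI / 2 = c * (PI / (2 * c))) by (field; lra).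
  nra.
Qed.

Theorem proposition1p1 (c : R) (hc : 0 < c < 1) :
  exists sigma a : R, 0 < sigma /\ 0 < a /\
  forall beta : nat -> R,
    (forall N : nat, c * ln (INR N) + 6 * ln (ln (INR N)) > PI / 2 ->
       0 < beta N < 1 /\ Lb (beta N) = c * ln (INR N) + 6 * ln (ln (INR N))) ->
    is_lim_seq (fun N => / Rpower (INR N) c * (SigmaN (beta N) (Lb (beta N))) ^ 2)
      (Finite (sigma ^ 2)) /\
    is_lim_seq (fun N => / Rpower (INR N) c * (SigmaN (beta N) (A_N N)) ^ 2)
      (Finite (sigma ^ 2)) /\
    is_lim_seq (fun N => / Rpower (INR N) (1 - c) *
                  RInt (fun x => INR N * htilde (beta N) x) 0 (A_N N))
      (Finite a).
Proof.
  assert (hsigma : 0 < 8 * PI ^ 2 / c ^ 3).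
  { pose proof PI_RGT_0. apply Rdiv_lt_0_compat; [nra | apply pow_lt; lra]. }
  exists (8 * PI ^ 2 / c ^ 3), 6. split; [exact hsigma|]. split; [lra|].
  intros beta hbeta.
  pose proof (is_lim_seq_ln_p _ is_lim_seq_INR) as hl.
  pose proof (Lb_spec_eventually c beta (proj1 hc) hbeta) as hspec.
  assert (hSigma : forall z, eventually (fun N => A_N N <= z N) ->
    is_lim_seq (fun N => / Rpower (INR N) c * SigmaN (beta N) (z N) ^ 2)
      ((8 * PI ^ 2 / c ^ 3) ^ 2)).
  { intros z hz. apply (is_lim_seq_sqrt_sqr (fun N => / exp (c * ln (INR N)))
      (fun N => RInt (fun x => hN (beta N) x ^ 2 * htilde (beta N) x) 0 (z N))).
    - apply pow_lt, hsigma.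
    - intros N. apply Rinv_0_lt_compat, exp_pos.
    - exact (Sigma2_lim c _ beta (proj1 hc) hl hspec z hz). }
  split; [|split].
  - exact (hSigma _ (A_le_Lb_eventually c _ beta (proj1 hc) hl hspec)).
  - exact (hSigma _ (filter_forall _ (fun N => Rle_refl _))).
  - refine (is_lim_seq_ext_loc _ _ _ _ (htilde_integral_lim c _ beta (proj1 hc) hl hspec)).
    generalize (filter_and _ _ hspec (proj2 (is_lim_seq_spec INR p_infty) is_lim_seq_INR 0)).
    apply filter_imp. intros N [[hb _] hN]. symmetry.
    exact (RInt_htilde_rescaled (INR N) c (beta N) (A_N N) hN hb).
Qed.
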